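(* Let $L$ be an LP in standard form: minimize $c^{\top}x$ subject to $Ax=b$, $Bx\le d$, $x\in\mathbb{R}^n$, with feasible set $\mathcal{F}$, and let $H$ be a subgroup of $G^{\rm Null}_{(A,B,d,c)}$. Let $\mathrm{Fix}_H(\mathbb{R}^n)=\{x\in\mathbb{R}^n: h(x)=x \text{ for all } h\in H\}$ and $\mathcal{T}=\mathcal{F}\cap \mathrm{Fix}_H(\mathbb{R}^n)$. Then $\mathcal{T}$ is non-empty if and only if $H$ is a subgroup of $G(A,b,B,d,c)^{\rm LP}$.
   Context: Here $A\in\mathbb{R}^{m\times n}$, $b\in\mathbb{R}^m$, $B\in\mathbb{R}^{m'\times n}$, $d\in\mathbb{R}^{m'}$, $c\in\mathbb{R}^n$. A constraint is redundant if deleting it does not change the feasible set. $L$ is in standard form if $\mathcal{F}\neq\emptyset$, $L$ has no redundant (equality or inequality) constraints, and none of the inequalities in $Bx\le d$ is satisfied with equality by every point of $\mathcal{F}$. $S_n$ acts on $\mathbb{R}^n$ by $\pi(x)=(x_{\pi^{-1}(1)},\dots,x_{\pi^{-1}(n)})^{\top}$, and $\Pi$ is the permutation matrix with $\Pi x=\pi(x)$. Define $G^{\rm LP}=\{\pi\in S_n: \pi(x)\in\mathcal{F}\text{ and } c^{\top}\pi(x)=c^{\top}x \text{ for all } x\in\mathcal{F}\}$ and $G(A,b,B,d,c)^{\rm LP}=\{\pi\in G^{\rm LP}:\pi(c)=c\}$. Let $G(B,d,c)$ be the set of $\pi\in S_n$ with $\pi(c)=c$ for which there exists a permutation $\sigma$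 of $\{1,\dots,m'\}$ with $B_{\sigma(i),\pi(j)}=B_{ij}$ and $d_{\sigma(i)}=d_i$ for all $i,j$ (if $B$ is empty, $G(B,d,c)=\{\pi:\pi(c)=c\}$). Let $\mathrm{Stab}(\mathrm{Row}(A))=\{\pi\in S_n:\Pi v\in\mathrm{Row}(A)\ \forall v\in\mathrm{Row}(A)\}$, where $\mathrm{Row}(A)\subseteq\mathbb{R}^n$ is the row space of $A$, and $G^{\rm Null}_{(A,B,d,c)}=\mathrm{Stab}(\mathrm{Row}(A))\cap G(B,d,c)$. *)

From HB Require Import structures.
From mathcomp Require Import all_boot all_order all_algebra all_fingroup.
Set Implicit Arguments. Unset Strict Implicit. Unset Printing Implicit Defensive.
Import Order.TTheory GRing.Theory Num.Theory.
Local Open Scope ring_scope.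

Section LP.
Variables (R : realFieldType) (m m' n : nat).
Variables (A : 'M[R]_(m, n)) (b : 'cV[R]_m) (B : 'M[R]_(m', n)) (d : 'cV[R]_m')
          (c : 'cV[R]_n).

Definition perm_vec (pi : {perm 'I_n}) (x : 'cV[R]_n) : 'cV[R]_n :=
  \col_i x (pi^-1 i)%g 0.
(* the same permutation matrix Pi acting on a vector of Row(A) (written as a row) *)
Definition perm_rvec (pi : {perm 'I_n}) (v : 'rV[R]_n) : 'rV[R]_n :=
  \row_j v 0 (pi^-1 j)%g.

Definition feasible (x : 'cV[R]_n) : Prop :=
  A *m x = b /\ forall i : 'I_m', (B *m x) i 0 <= d i 0.

Definition feasible_wo_eq (k : 'I_m) (x : 'cV[R]_n) : Prop :=
  (forall i : 'I_m, i != k -> (A *m x) i 0 = b i 0) /\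
  (forall i : 'I_m', (B *m x) i 0 <= d i 0).

Definition feasible_wo_ineq (k : 'I_m') (x : 'cV[R]_n) : Prop :=
  A *m x = b /\ (forall i : 'I_m', i != k -> (B *m x) i 0 <= d i 0).

Definition redundant_eq (k : 'I_m) : Prop :=
  forall x, feasible_wo_eq k x <-> feasible x.
Definition redundant_ineq (k : 'I_m') : Prop :=
  forall x, feasible_wo_ineq k x <-> feasible x.

Definition standard_form : Prop :=
  [/\ exists x, feasible x,
      forall k, ~ redundant_eq k,
      forall k, ~ redundant_ineq k &
      forall k : 'I_m', ~ (forall x, feasible x -> (B *m x) k 0 = d k 0)].

Definition in_GLP (pi : {perm 'I_n}) : Prop :=
  forall x, feasible x -> feasible (perm_vec pi x) /\
                          c^T *m perm_vec pi x = c^T *m x.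

Definition in_GLP_c (pi : {perm 'I_n}) : Prop :=
  in_GLP pi /\ perm_vec pi c = c.

Definition in_GBdc (pi : {perm 'I_n}) : Prop :=
  perm_vec pi c = c /\
  exists sigma : {perm 'I_m'},
    forall (i : 'I_m') (j : 'I_n), B (sigma i) (pi j) = B i j /\ d (sigma i) 0 = d i 0.

Definition in_StabRow (pi : {perm 'I_n}) : Prop :=
  forall v : 'rV[R]_n, (v <= A)%MS -> (perm_rvec pi v <= A)%MS.

Definition in_GNull (pi : {perm 'I_n}) : Prop := in_StabRow pi /\ in_GBdc pi.

End LP.

From HB Require Import structures.
From mathcomp Require Import all_boot all_order all_algebra all_fingroup.
Import Order.TTheory GRing.Theory Num.Theory.
Set Implicit Arguments.
Unset Strict Implicit.
Unset Printing Implicit Defensive.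
Local Open Scope ring_scope.

(* If some feasible x is fixed by every h in H, each h is in G^LP: h maps ker A
   to itself (row-space stability of h^-1), hence maps the fibre {y | A y = b} of
   the fixed point x to itself; it permutes the inequality rows via sigma, and it
   fixes c.  Conversely, if H lies in G^LP, the H-average of any feasible point
   is feasible by convexity and fixed by H. *)

Lemma stablemx_mulmx_eq (F : fieldType) (m n : nat) (A : 'M[F]_(m, n))
    (M : 'M_n) (x y : 'cV_n) :
  stablemx A M -> A *m x = A *m y -> A *m M *m x = A *m M *m y.
Proof. by move=> /submxP [X ->] Axy; rewrite -!mulmxA Axy. Qed.

Section PermVec.
Variables (R : realFieldType) (n : nat).
Implicit Types (pi : {perm 'I_n}) (x : 'cV[R]_n).

Lemma perm_vecE pi x : perm_vec pi x = perm_mx pi^-1 *m x.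
Proof. by rewrite -row_permE; apply/matrixP => i j; rewrite !mxE ord1. Qed.

Lemma perm_rvecE pi (v : 'rV[R]_n) : perm_rvec pi v = v *m perm_mx pi.
Proof.
by rewrite -[pi in RHS]invgK -col_permE; apply/matrixP => i j; rewrite !mxE ord1.
Qed.

Lemma perm_vec1 x : perm_vec 1 x = x.
Proof. by rewrite perm_vecE invg1 perm_mx1 mul1mx. Qed.

Lemma perm_vecM pi pi' x : perm_vec (pi * pi') x = perm_vec pi' (perm_vec pi x).
Proof. by rewrite !perm_vecE invMg perm_mxM mulmxA. Qed.

Lemma perm_vecV_fixed pi x : perm_vec pi x = x -> perm_vec pi^-1 x = x.
Proof. by move=> fx; rewrite -{1}fx -perm_vecM mulgV perm_vec1. Qed.

Lemma trmx_mul_perm_vec pi (c : 'cV[R]_n) x :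
  perm_vec pi c = c -> c^T *m perm_vec pi x = c^T *m x.
Proof.
move=> fc; rewrite perm_vecE mulmxA -[c^T *m _]trmxK trmx_mul trmxK tr_perm_mx.
by rewrite -perm_vecE perm_vecV_fixed.
Qed.

Lemma stablemx_perm_mx m (A : 'M[R]_(m, n)) pi :
  in_StabRow A pi -> stablemx A (perm_mx pi).
Proof.
by move=> stA; apply/row_subP => i; rewrite row_mul -perm_rvecE; apply/stA/row_sub.
Qed.

Lemma mulmx_perm_vec_row m (B : 'M[R]_(m, n)) pi (sigma : {perm 'I_m}) x i :
  (forall i j, B (sigma i) (pi j) = B i j) ->
  (B *m perm_vec pi x) (sigma i) 0 = (B *m x) i 0.
Proof.
move=> sB; rewrite !mxE (reindex_inj (@perm_inj _ pi)).
by apply: eq_bigr => j _; rewrite mxE permK sB.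
Qed.

Definition group_avg (H : {group {perm 'I_n}}) x : 'cV[R]_n :=
  #|H|%:R^-1 *: \sum_(h in H) perm_vec h x.

Lemma perm_vec_group_avg (H : {group {perm 'I_n}}) g x :
  g \in H -> perm_vec g (group_avg H x) = group_avg H x.
Proof.
move=> gH; rewrite perm_vecE -scalemxAr mulmx_sumr; congr (_ *: _).
under eq_bigr => h _ do rewrite -perm_vecE -perm_vecM.
by rewrite [RHS](reindex_inj (mulIg g)); apply: eq_bigl => h; rewrite /= groupMr.
Qed.

End PermVec.

Section Feasible.
Variables (R : realFieldType) (m m' n : nat).
Variables (A : 'M[R]_(m, n)) (b : 'cV[R]_m) (B : 'M[R]_(m', n)) (d : 'cV[R]_m').

Lemma feasible_avg (I : finType) (P : {pred I}) (x : I -> 'cV[R]_n) :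
  (0 < #|P|)%N -> (forall i, i \in P -> feasible A b B d (x i)) ->
  feasible A b B d (#|P|%:R^-1 *: \sum_(i in P) x i).
Proof.
move=> P_gt0 fx; have Pnz : #|P|%:R != 0 :> R by rewrite pnatr_eq0 -lt0n.
split.
  rewrite -scalemxAr mulmx_sumr (eq_bigr (fun=> b)); last by move=> i /fx [].
  by rewrite sumr_const -scaler_nat scalerA mulVf // scale1r.
move=> k; rewrite -scalemxAr mulmx_sumr mxE summxE.
rewrite ler_pdivrMl ?ltr0n // mulr_natl -sumr_const.
by apply: ler_sum => i /fx [_ /(_ k)].
Qed.

Lemma feasible_group_avg (H : {group {perm 'I_n}}) x :
  (forall h, h \in H -> feasible A b B d (perm_vec h x)) ->
  feasible A b B d (group_avg H x).
Proof. exact: feasible_avg (cardG_gt0 H). Qed.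

Lemma perm_vec_eq_constraints pi x y :
  in_StabRow A pi^-1 -> A *m x = b -> perm_vec pi x = x ->
  A *m y = b -> A *m perm_vec pi y = b.
Proof.
move=> stA Ax fx Ay; rewrite -Ax -{1}fx !perm_vecE !mulmxA.
by apply: stablemx_mulmx_eq (stablemx_perm_mx stA) _; rewrite Ax Ay.
Qed.

Lemma perm_vec_ineq_constraints (c : 'cV[R]_n) pi y :
  in_GBdc B d c pi -> (forall i, (B *m y) i 0 <= d i 0) ->
  forall k, (B *m perm_vec pi y) k 0 <= d k 0.
Proof.
move=> [_ [sigma sBd]] By k.
(* The condition on d in in_GBdc is quantified over columns, so it is vacuous when n = 0. *)
have [n0|n_gt0] := posnP n.
  suff -> : perm_vec pi y = y by apply: By.
  apply/matrixP => i; have : (i < 0)%N by rewrite -n0 ltn_ord.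
  by rewrite ltn0.
rewrite -(permKV sigma k) mulmx_perm_vec_row; last by move=> i j; case: (sBd i j).
by rewrite (sBd _ (Ordinal n_gt0)).2.
Qed.

Lemma in_GLP_c_of_fixed_feasible (c : 'cV[R]_n) pi x :
  in_StabRow A pi^-1 -> in_GBdc B d c pi ->
  feasible A b B d x -> perm_vec pi x = x -> in_GLP_c A b B d c pi.
Proof.
move=> stA GBd [Ax _] fx; split; last by case: GBd.
move=> y [Ay By]; split; last by apply: trmx_mul_perm_vec; case: GBd.
split; first exact: perm_vec_eq_constraints Ax fx Ay.
exact: perm_vec_ineq_constraints GBd By.
Qed.

End Feasible.

Theorem theorem3 (R : realFieldType) (m m' n : nat)
  (A : 'M[R]_(m, n)) (b : 'cV[R]_m) (B : 'M[R]_(m', n)) (d : 'cV[R]_m')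
  (c : 'cV[R]_n) (H : {group {perm 'I_n}}) :
  standard_form A b B d ->
  (forall h, h \in H -> in_GNull A B d c h) ->
  ((exists x : 'cV[R]_n, feasible A b B d x /\ forall h, h \in H -> perm_vec h x = x)
   <-> (forall h, h \in H -> in_GLP_c A b B d c h)).
Proof.
move=> [[x0 fx0] _ _ _] HN; split.
  move=> [x [fx Hx]] h hH.
  have [_ GBd] := HN h hH; have [stA _] := HN _ (groupVr hH).
  exact: in_GLP_c_of_fixed_feasible stA GBd fx (Hx h hH).
move=> HGLP; exists (group_avg H x0); split=> [|h]; last exact: perm_vec_group_avg.
by apply: feasible_group_avg => h /HGLP [/(_ _ fx0) []].
Qed.
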